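(* Let $G$ be a plane triangulation whose geometric dual $G^*$ admits a $2$-factor consisting of at most two cycles. Then $\chi_1(G) = 2$.
   Context: All graphs are finite and simple. A mapping $f : V(G) \to E(G) \cup \{\emptyset\}$ is a $1$-selection of $G$ if for every $v \in V(G)$ either $f(v)$ is an edge incident with $v$ or $f(v) = \emptyset$. The graph $G_f$ is obtained from $G$ by deleting all edges in $f(V(G))$. The robust chromatic number is $\chi_1(G) = \min_f \chi(G_f)$ over all $1$-selections $f$ of $G$. A plane triangulation is a simple plane graph in which every face is bounded by a $3$-cycle. The geometric dual $G^*$ of a plane graph $G$ has a vertex for each face of $G$ and, for each edge $e$ of $G$, an edge joining the vertices corresponding to the two faces incident with $e$ (it may be a multigraph). A $2$-factor is a $2$-regular spanning subgraph. *)

(* Plane graphs are represented combinatorially by rotation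
   systems (combinatorial maps): darts D, a fixed-point-free involution
   [alpha] (the two darts of an edge), a permutation [sigma] whose orbits are
   the darts around each vertex, and faces = orbits of [phi = sigma \o alpha].
   A connected map is plane (genus 0) iff Euler's formula V - E + F = 2 holds. *)
From mathcomp Require Import all_boot all_order.
From mathcomp Require Import fingroup perm.
Set Implicit Arguments. Unset Strict Implicit. Unset Printing Implicit Defensive.

Section Defs.
Variables (V D : finType) (tail : D -> V) (alpha sigma : {perm D}).

Definition phi (d : D) : D := sigma (alpha d).

Definition adj : rel V :=
  fun u v => [exists d, (tail d == u) && (tail (alpha d) == v)].

Definition nfaces : nat := fcard phi D.
Definition nedges : nat := #|D| %/ 2.

Definition plane_triangulation : Prop :=
  (forall d, alpha (alpha d) = d /\ alpha d != d) /\
      (forall d d', (tail d == tail d') = fconnect sigma d d') /\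
      (forall v, exists d, tail d = v) /\
      (forall d, tail (alpha d) != tail d) /\
      (forall d d', tail d = tail d' -> tail (alpha d) = tail (alpha d') -> d = d') /\
                                                                (* no multiple edges *)
      (forall u v, connect adj u v) /\
      #|V| + nfaces = nedges + 2 /\                            (* Euler: genus 0 *)
      (forall d, fingraph.order phi d = 3).

(* Geometric dual: vertices = faces (phi-orbits), one edge per edge of G
   (alpha-orbit {d, alpha d}) joining the face of d and the face of alpha d.
   A spanning subgraph of G* is a set S of darts closed under alpha (the set of
   darts of the selected edges); the degree of the face of d is the number of
   darts of S on that face (a loop counts twice). *)
Definition dual_two_factor (S : {set D}) : Prop :=
  (forall d, (alpha d \in S) = (d \in S)) /\
  (forall d, #|[set d' in S | fconnect phi d d']| = 2).

(* connectivity of the subgraph S of G*, lifted to darts *)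
Definition dual_sub_rel (S : {set D}) : rel D :=
  fun d d' => fconnect phi d d' || ((d \in S) && (d' == alpha d)).

Definition dual_ncomp (S : {set D}) : nat := n_comp (dual_sub_rel S) D.

End Defs.

Section Chromatic.
Variable V : finType.

Definition colorable (k : nat) (e : rel V) : bool :=
  [exists c : {ffun V -> 'I_k}, [forall u, forall v, e u v ==> (c u != c v)]].

Lemma colorable_card (e : rel V) : irreflexive e -> exists k, colorable k e.
Proof.
move=> irr; exists #|V|; apply/existsP; exists [ffun v => enum_rank v].
apply/forallP=> u; apply/forallP=> v; apply/implyP=> euv.
rewrite !ffunE; apply/negP=> /eqP /enum_rank_inj Euv.
by move: euv; rewrite Euv irr.
Qed.

(* chromatic number of a loopless graph; for a relation with a loop (never
   used) it is defined via the symmetric-irreflexive part. *)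
Definition irr_part (e : rel V) : rel V := fun u v => (u != v) && e u v.

Lemma irr_part_irr (e : rel V) : irreflexive (irr_part e).
Proof. by move=> u; rewrite /irr_part eqxx. Qed.

Definition chi (e : rel V) : nat :=
  ex_minn (colorable_card (irr_part_irr e)).

(* 1-selections: f v = Some u means f selects the edge vu (incident with v). *)
Definition one_selection (e : rel V) (f : {ffun V -> option V}) : bool :=
  [forall v, if f v is Some u then e v u else true].

Definition del_sel (e : rel V) (f : {ffun V -> option V}) : rel V :=
  fun u v => [&& e u v, f u != Some v & f v != Some u].

Lemma chi1_ex (e : rel V) :
  exists k, [exists f, one_selection e f && (chi (del_sel e f) == k)].
Proof.
exists (chi (del_sel e [ffun=> None])); apply/existsP; exists [ffun=> None].
rewrite eqxx andbT; apply/forallP=> v; by rewrite ffunE.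
Qed.

Definition chi1 (e : rel V) : nat := ex_minn (chi1_ex e).

End Chromatic.

(* Work over F_2 with the incidence matrix of G and the boundary matrix of its
   faces.  Every face meets S in an even number of darts, so the indicator of S is
   orthogonal to all face boundaries; by Euler's formula these span the cycle space
   of G, hence S is an edge cut and G restricted to S is bipartite.  A cycle made of
   edges outside S is a sum of faces whose coefficients are constant on each of the
   at most two cycles of the 2-factor, so these edges have a cycle space of
   dimension at most one: every component is a tree or unicyclic, can be oriented
   with out-degree at most one, and letting each vertex select its out-edge deletes
   all of them.  Conversely a triangulation on n >= 4 vertices has 3n - 6 > n edges,
   so some edge survives every 1-selection. *)
From mathcomp Require Import all_boot all_order all_algebra fingroup perm.
From mathcomp Require Import zify.
Set Implicit Arguments. Unset Strict Implicit. Unset Printing Implicit Defensive.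
Import GRing.Theory.

Section Chromatic.
Variable T : finType.

Lemma chi_ge2 (e : rel T) u v : irr_part e u v -> 2 <= chi e.
Proof.
move=> euv; rewrite /chi; case: ex_minnP => k ck _.
case/existsP: ck => c /forallP /(_ u) /forallP /(_ v) /implyP /(_ euv).
case: k c => [|[|k]] c //; first by case: (c u).
by rewrite (ord1 (c u)) (ord1 (c v)).
Qed.

Lemma chi_le (e : rel T) k : colorable k (irr_part e) -> chi e <= k.
Proof. by move=> ck; rewrite /chi; case: ex_minnP => k' _ /(_ k ck). Qed.

Lemma colorable2_bool (e : rel T) (c : T -> bool) :
  (forall u v, e u v -> c u != c v) -> colorable 2 e.
Proof.
move=> c_ok; apply/existsP; exists [ffun v => if c v then ord0 else ord_max].
apply/forallP => u; apply/forallP => v; apply/implyP => /c_ok.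
by rewrite !ffunE; case: (c u); case: (c v).
Qed.

Lemma chi1_eq2 (e : rel T) (f : {ffun T -> option T}) :
  irreflexive e -> one_selection e f -> colorable 2 (irr_part (del_sel e f)) ->
  (forall g, exists u v, del_sel e g u v) -> chi1 e = 2.
Proof.
move=> e_irr f_sel f_col survive.
have chi_ge g : 2 <= chi (del_sel e g).
  have [u [v uv]] := survive g; apply: (@chi_ge2 _ u v).
  rewrite /irr_part uv andbT; apply: contraTneq uv => ->.
  by rewrite /del_sel e_irr.
rewrite /chi1; case: ex_minnP => k /existsP[g /andP[_ /eqP <-]] min_k.
apply/eqP; rewrite eqn_leq chi_ge andbT; apply: leq_trans (chi_le f_col).
by apply: min_k; apply/existsP; exists f; rewrite f_sel eqxx.
Qed.

End Chromatic.

Local Open Scope ring_scope.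

Definition F2 : fieldType := 'F_2.

Lemma F2_addrr (x : F2) : x + x = 0.
Proof. exact: (addrr_pchar2 (pchar_Fp (isT : prime 2))). Qed.

Lemma F2_oppr (x : F2) : - x = x.
Proof. exact: (oppr_pchar2 (pchar_Fp (isT : prime 2))). Qed.

Lemma F2_natr_even (d : nat) : ~~ odd d -> (d%:R : F2) = 0.
Proof.
move=> ev; rewrite -[d]odd_double_half (negbTE ev) add0n -muln2 natrM.
by rewrite [2%:R](natrD _ 1 1) F2_addrr mulr0.
Qed.

Lemma F2_eq0_neq (x y : F2) : x != y -> (x == 0) != (y == 0).
Proof. by rewrite /F2 in x y *; case: x => [[|[|?]] ?]; case: y => [[|[|?]] ?]. Qed.

Lemma sumr_mul_delta (R : pzSemiRingType) (k : nat) (f : 'I_k -> R) (x : 'I_k) :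
  \sum_(v < k) f v * (x == v)%:R = f x.
Proof.
rewrite (bigD1 x) //= eqxx mulr1 big1 ?addr0 // => v /negbTE.
by rewrite eq_sym => ->; rewrite mulr0.
Qed.

Lemma sumn_eq_delta (k : nat) (x : 'I_k) : (\sum_(v < k) (x == v : nat))%N = 1%N.
Proof.
rewrite (bigD1 x) //= eqxx big1 ?addn0 // => v /negbTE; by rewrite eq_sym => ->.
Qed.

Lemma mxrank_le_support (F : fieldType) (m n : nat) (P : {set 'I_m}) (A : 'M[F]_(m, n)) :
  (forall i, i \notin P -> row i A = 0) -> (\rank A <= #|P|)%N.
Proof.
move=> A0; set B := \matrix_(k < #|P|) row (enum_val k) A.
apply: leq_trans (rank_leq_row B); apply: mxrankS; apply/row_subP => i.
have [iP|iP] := boolP (i \in P); last by rewrite A0 // sub0mx.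
by apply: (eq_row_sub (enum_rank_in iP i)); rewrite rowK enum_rankK_in.
Qed.

Lemma row_sub_const1 (F : fieldType) (k : nat) (x : 'rV[F]_k) :
  (forall j j', x 0 j = x 0 j') -> (x <= (const_mx 1 : 'rV[F]_k))%MS.
Proof.
case: k x => [|k] x xE; first by rewrite (_ : x = 0) ?sub0mx //; apply/rowP => -[].
have -> : x = x 0 0 *: const_mx 1 by apply/rowP => j; rewrite !mxE mulr1 (xE j 0).
exact: scalemx_sub.
Qed.

Lemma mxrank_ker_le_const1 (F : fieldType) (m n : nat) (A : 'M[F]_(m, n)) :
  (kermx A <= (const_mx 1 : 'rV[F]_m))%MS -> (m <= (\rank A).+1)%N.
Proof. by move/mxrankS; rewrite mxrank_ker; have := rank_leq_row (const_mx 1 : 'rV[F]_m); lia. Qed.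

Lemma connect_invariant (T : finType) (U : eqType) (e : rel T) (h : T -> U) :
  (forall x y, e x y -> h x = h y) -> forall x y, connect e x y -> h x = h y.
Proof.
move=> eh x y /connectP[p ep ->]; elim: p x ep => //= z p IH x /andP[/eh -> /IH //].
Qed.

Section Incidence.
Variables (n m : nat) (a b : 'I_m -> 'I_n).
Hypothesis ab_neq : forall i, a i != b i.

Definition incmx : 'M[F2]_(m, n) := locked (\matrix_(i, v) ((a i == v)%:R + (b i == v)%:R)).

Lemma incmxE i v : incmx i v = (a i == v)%:R + (b i == v)%:R.
Proof. by rewrite /incmx -lock mxE. Qed.

Definition incmx_on (P : {set 'I_m}) : 'M[F2]_(m, n) :=
  \matrix_(i, v) (if i \in P then incmx i v else 0).

Definition incident i v := (a i == v) || (b i == v).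

Definition degree (P : {set 'I_m}) v := #|[set i in P | incident i v]|.

Definition covered (P : {set 'I_m}) := [set v | (0 < degree P v)%N].

Lemma mul_tr_incmx (c : 'rV[F2]_n) i : (c *m incmx^T) 0 i = c 0 (a i) + c 0 (b i).
Proof.
rewrite mxE; under eq_bigr do rewrite mxE incmxE mulrDr.
by rewrite big_split /= !sumr_mul_delta.
Qed.

Lemma incmx_row_sum i : \sum_v incmx i v = 0.
Proof.
transitivity (((const_mx 1 : 'rV[F2]_n) *m incmx^T) 0 i).
  by rewrite mxE; apply: eq_bigr => v _; rewrite !mxE mul1r.
by rewrite mul_tr_incmx !mxE F2_addrr.
Qed.

Lemma mul_tr_incmx_on (c : 'rV[F2]_n) (P : {set 'I_m}) i :
  i \in P -> (c *m (incmx_on P)^T) 0 i = c 0 (a i) + c 0 (b i).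
Proof. by move=> iP; rewrite -mul_tr_incmx !mxE; apply: eq_bigr => v _; rewrite !mxE iP. Qed.

Lemma row_incmx_on_out (P : {set 'I_m}) i : i \notin P -> row i (incmx_on P) = 0.
Proof. by move=> iP; apply/rowP => v; rewrite !mxE (negbTE iP). Qed.

Lemma row_incmx_on_in (P : {set 'I_m}) i : i \in P -> row i (incmx_on P) = row i incmx.
Proof. by move=> iP; apply/rowP => v; rewrite !mxE iP. Qed.

Lemma incident_nat i v : (incident i v : nat) = ((a i == v) + (b i == v))%N.
Proof.
rewrite /incident; case: eqP => [<-|_]; case: eqP => [e|_] //.
by move: (ab_neq i); rewrite e eqxx.
Qed.

Lemma degreeE (P : {set 'I_m}) v : degree P v = (\sum_(i in P) (incident i v : nat))%N.
Proof.
rewrite /degree -sum1_card big_mkcond [RHS]big_mkcond; apply: eq_bigr => i _.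
by rewrite inE; case: (i \in P); case: (incident i v).
Qed.

Lemma sum_degree (P : {set 'I_m}) : (\sum_v degree P v)%N = (2 * #|P|)%N.
Proof.
under eq_bigr do rewrite degreeE.
rewrite exchange_big /= -sum1_card big_distrr /=; apply: eq_bigr => i _.
under eq_bigr do rewrite incident_nat.
by rewrite big_split /= !sumn_eq_delta.
Qed.

Lemma card_covered (P : {set 'I_m}) : (\sum_v (0 < degree P v : nat))%N = #|covered P|.
Proof.
rewrite -sum1_card [RHS]big_mkcond; apply: eq_bigr => v _.
by rewrite inE; case: (0 < degree P v)%N.
Qed.

Lemma sum_incmx_col (P : {set 'I_m}) v : \sum_(i in P) incmx i v = (degree P v)%:R.
Proof. by rewrite degreeE natr_sum; apply: eq_bigr => i _; rewrite incmxE incident_nat natrD. Qed.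

Lemma mxrank_incmx_on_setD1 (P : {set 'I_m}) i0 :
  (\rank (incmx_on P) <= (\rank (incmx_on (P :\ i0))).+1)%N.
Proof.
set R : 'M[F2]_(m, n) := \matrix_(i, v) (if (i == i0) && (i \in P) then incmx i v else 0).
have -> : incmx_on P = incmx_on (P :\ i0) + R.
  apply/matrixP => i v; rewrite !mxE !inE.
  by case: (i == i0); case: (i \in P); rewrite /= ?addr0 ?add0r.
apply: leq_trans (mxrank_add _ _) _; rewrite -(addn1 (\rank _)) leq_add2l -(cards1 i0).
apply: mxrank_le_support => i; rewrite inE => ni; apply/rowP => v.
by rewrite !mxE (negbTE ni).
Qed.

(* The columns of incmx_on P sum to zero, so one covered column is redundant. *)
Lemma mxrank_incmx_on_covered (P : {set 'I_m}) : (0 < #|P|)%N ->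
  (\rank (incmx_on P) <= (#|covered P|).-1)%N.
Proof.
case/card_gt0P => i0 i0P.
have w0N : a i0 \in covered P.
  by rewrite inE; apply/card_gt0P; exists i0; rewrite inE i0P /incident eqxx.
set w0 := a i0 in w0N *.
rewrite -mxrank_tr (cardsD1 w0) w0N /=.
set A := \matrix_(v, i) (if v == w0 then 0 else (incmx_on P)^T v i).
apply: (@leq_trans (\rank A)); last first.
  apply: mxrank_le_support => v; rewrite !inE negb_and negbK => vN.
  apply/rowP => i; rewrite !mxE; case: eqP => // /eqP vw; rewrite (negbTE vw) /= in vN.
  case: ifP => // iP; move: vN; rewrite -leqNgt leqn0 cards_eq0 => /eqP/setP/(_ i).
  rewrite !inE iP /incident /= incmxE => /negbT; rewrite negb_or.
  by case/andP=> /negbTE -> /negbTE ->; rewrite addr0.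
apply: mxrankS; apply/row_subP => v.
have [->|vw] := eqVneq v w0; last first.
  by apply: (eq_row_sub v); apply/rowP => i; rewrite !mxE (negbTE vw).
have -> : row w0 (incmx_on P)^T = (\row_v ((v != w0)%:R : F2)) *m A.
  apply/rowP => i.
  have : \sum_v (incmx_on P)^T v i = 0.
    under eq_bigr do rewrite !mxE.
    by case: (i \in P); rewrite ?incmx_row_sum // big1.
  rewrite (bigD1 w0) //= => /eqP; rewrite addr_eq0 F2_oppr [LHS]mxE => /eqP ->.
  rewrite [RHS]mxE big_mkcond /=; apply: eq_bigr => u _; rewrite !mxE.
  by case: eqP => [->|_]; rewrite ?mul0r ?mul1r.
exact: submxMl.
Qed.

Lemma card_covered_ge2 (P : {set 'I_m}) : (0 < #|P|)%N -> (2 <= #|covered P|)%N.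
Proof.
case/card_gt0P => i0 i0P; have <- : #|[set a i0; b i0]| = 2%N by rewrite cards2 ab_neq.
apply/subset_leq_card/subsetP => x; rewrite in_set2 inE => /orP[] /eqP ->.
all: by apply/card_gt0P; exists i0; rewrite inE i0P /incident eqxx ?orbT.
Qed.

Lemma degree1_edge (P : {set 'I_m}) w : degree P w = 1%N ->
  exists2 i0, i0 \in P & forall i, i \in P -> incident i w = (i == i0).
Proof.
rewrite /degree => /eqP/cards1P[i0 Pw]; exists i0.
  by have := set11 i0; rewrite -Pw inE => /andP[].
by move=> i iP; move/setP/(_ i): Pw; rewrite !inE iP.
Qed.

Lemma leaf_exists (P : {set 'I_m}) r : (0 < #|P|)%N -> (#|P| <= \rank (incmx_on P))%N ->
  exists2 w, w != r & degree P w = 1%N.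
Proof.
move=> P0 Pr; have rN := mxrank_incmx_on_covered P0.
suff /existsP[w /andP[wr /eqP w1]] : [exists w, (w != r) && (degree P w == 1%N)].
  by exists w.
apply: contraT => /existsPn no_leaf.
have : (\sum_w 2 * (0 < degree P w) <= \sum_w (degree P w + (r == w)))%N.
  apply: leq_sum => w _; have [->|wr] := eqVneq w r; first by case: (degree P r) => [|[|d]].
  by move: (no_leaf w); rewrite wr; case: (degree P w) => [|[|d]].
rewrite -big_distrr /= card_covered big_split /= sum_degree sumn_eq_delta.
by move: rN Pr P0; case: #|covered P| => [|N] /=; lia.
Qed.

Lemma degree_even_no_leaf (P : {set 'I_m}) : (0 < #|P|)%N -> (#|P| <= (\rank (incmx_on P)).+1)%N ->
  (forall w, degree P w != 1%N) -> forall w, ~~ odd (degree P w).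
Proof.
move=> P0 Pr no_leaf.
have : (\sum_w (2 * (0 < degree P w) + (2 < degree P w)) <= \sum_w degree P w)%N.
  by apply: leq_sum => w _; move: (no_leaf w); case: (degree P w) => [|[|[|d]]].
rewrite big_split /= -big_distrr /= card_covered sum_degree => le_sum.
have /eqP : (\sum_w (2 < degree P w : nat) == 0)%N.
  have := mxrank_incmx_on_covered P0; have := card_covered_ge2 P0.
  by move: le_sum Pr; case: #|covered P| => [|N] /=; lia.
move/eqP; rewrite sum_nat_eq0 => /forallP big0 w.
by move: (big0 w) (no_leaf w); case: (degree P w) => [|[|[|d]]].
Qed.

Lemma incmx_on_sub_setD1 (P : {set 'I_m}) i0 : (forall w, ~~ odd (degree P w)) ->
  (incmx_on P <= incmx_on (P :\ i0))%MS.
Proof.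
move=> even; apply/row_subP => i.
have [iP|iP] := boolP (i \in P); last by rewrite row_incmx_on_out // sub0mx.
case: (eqVneq i i0) iP => [-> i0P|ii0 iP]; last first.
  by apply: (eq_row_sub i); rewrite !row_incmx_on_in // !inE ii0.
rewrite row_incmx_on_in //.
have -> : row i0 incmx = (\row_j ((j \in P :\ i0)%:R : F2)) *m incmx_on (P :\ i0).
  apply/rowP => v; rewrite !mxE.
  move: (F2_natr_even (even v)); rewrite -sum_incmx_col (bigD1 i0) //= => /eqP.
  rewrite addr_eq0 F2_oppr => /eqP ->.
  rewrite [LHS]big_mkcond; apply: eq_bigr => j _; rewrite !mxE !inE.
  by case: (j != i0); case: (j \in P); rewrite /= ?mul1r ?mul0r.
exact: submxMl.
Qed.

(* Edge [i] is oriented away from [g i]; injectivity bounds every out-degree by one. *)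
Definition injective_orientation (P : {set 'I_m}) (g : 'I_m -> 'I_n) :=
  (forall i, i \in P -> incident i (g i)) /\ {in P &, injective g}.

Lemma injective_orientation_setD1 (P : {set 'I_m}) i0 w g :
  i0 \in P -> incident i0 w -> injective_orientation (P :\ i0) g ->
  {in P :\ i0, forall i, g i != w} ->
  injective_orientation P (fun i => if i == i0 then w else g i).
Proof.
move=> i0P i0w [g_inc g_inj] g_w.
have P' x : x \in P -> x != i0 -> x \in P :\ i0 by move=> xP xi; rewrite !inE xi.
split=> [i iP /=|i j iP jP /=].
  by case: (eqVneq i i0) => [->|ii0] //; apply: g_inc; exact: P'.
have [->|ii0] := eqVneq i i0; have [->|ji0] := eqVneq j i0 => // e.
- by move: (g_w j (P' _ jP ji0)); rewrite e eqxx.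
- by move: (g_w i (P' _ iP ii0)); rewrite e eqxx.
- exact: g_inj (P' _ iP ii0) (P' _ jP ji0) e.
Qed.

Lemma injective_orientation_set0 (g : 'I_m -> 'I_n) : injective_orientation set0 g.
Proof. by split=> [i|i j]; rewrite inE. Qed.

Lemma injective_orientation_leaf (P : {set 'I_m}) i0 w g :
  i0 \in P -> (forall i, i \in P -> incident i w = (i == i0)) ->
  injective_orientation (P :\ i0) g ->
  injective_orientation P (fun i => if i == i0 then w else g i).
Proof.
move=> i0P w_i0 g_or; apply: injective_orientation_setD1 => //; first by rewrite w_i0.
move=> i; rewrite !inE => /andP[ii0 iP]; apply: contra_neq (ii0) => giw.
by apply/eqP; rewrite -w_i0 // -giw (g_or.1 i) // !inE ii0.
Qed.

(* Over F_2, #|P| - \rank (incmx_on P) is the dimension of the cycle space of P. *)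
Lemma forest_orientation (P : {set 'I_m}) r : (#|P| <= \rank (incmx_on P))%N ->
  exists2 g, injective_orientation P g & {in P, forall i, g i != r}.
Proof.
have [k Pk] := ubnP #|P|; elim: k P Pk => // k IH P Pk Pr.
have [P0|P_gt0] := posnP #|P|.
  by exists a => [|i]; rewrite (cards0_eq P0) ?inE //; apply: injective_orientation_set0.
have [w wr /degree1_edge[i0 i0P i0w]] := leaf_exists r P_gt0 Pr.
have P'k : (#|P :\ i0| < k)%N by rewrite (cardsD1 i0) i0P in Pk.
have P'r : (#|P :\ i0| <= \rank (incmx_on (P :\ i0)))%N.
  by move: (mxrank_incmx_on_setD1 P i0) Pr; rewrite (cardsD1 i0 P) i0P; lia.
have [g g_or g_r] := IH _ P'k P'r.
exists (fun i => if i == i0 then w else g i).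
  exact: injective_orientation_leaf.
by move=> i iP /=; case: (eqVneq i i0) => [//|ii0]; apply: g_r; rewrite !inE ii0.
Qed.

Lemma pseudoforest_orientation (P : {set 'I_m}) : (#|P| <= (\rank (incmx_on P)).+1)%N ->
  exists g, injective_orientation P g.
Proof.
have [k Pk] := ubnP #|P|; elim: k P Pk => // k IH P Pk Pr.
have [P0|P_gt0] := posnP #|P|.
  by exists a; rewrite (cards0_eq P0); apply: injective_orientation_set0.
have [/existsP[w /eqP /degree1_edge[i0 i0P i0w]]|/existsPn no_leaf] :=
  boolP [exists w, degree P w == 1%N].
  have P'k : (#|P :\ i0| < k)%N by rewrite (cardsD1 i0) i0P in Pk.
  have P'r : (#|P :\ i0| <= (\rank (incmx_on (P :\ i0))).+1)%N.
    by move: (mxrank_incmx_on_setD1 P i0) Pr; rewrite (cardsD1 i0 P) i0P; lia.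
  have [g g_or] := IH _ P'k P'r.
  exists (fun i => if i == i0 then w else g i).
  exact: injective_orientation_leaf.
(* Without leaves P is a union of cycles, so deleting any edge i0 leaves a forest. *)
have even := degree_even_no_leaf P_gt0 Pr no_leaf.
have [i0 i0P] := card_gt0P P_gt0.
have P'r : (#|P :\ i0| <= \rank (incmx_on (P :\ i0)))%N.
  by move: (mxrankS (incmx_on_sub_setD1 i0 even)) Pr; rewrite (cardsD1 i0 P) i0P; lia.
have [g g_or g_r] := forest_orientation (a i0) P'r.
exists (fun i => if i == i0 then a i0 else g i).
by apply: injective_orientation_setD1 => //; rewrite /incident eqxx.
Qed.

End Incidence.

Section RotationSystem.
Variables (V D : finType) (tail : D -> V) (alpha sigma : {perm D}).
Hypothesis triang : plane_triangulation tail alpha sigma.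

Local Notation ph := (phi alpha sigma).
Local Notation G := (adj tail alpha).

Lemma alphaK : involutive alpha.
Proof. by move=> d; case: triang => /(_ d)[]. Qed.

Lemma alpha_neq d : alpha d != d.
Proof. by case: triang => /(_ d)[]. Qed.

Lemma eq_tail d d' : (tail d == tail d') = fconnect sigma d d'.
Proof. by case: triang => _ []. Qed.

Lemma tail_surj v : exists d, tail d = v.
Proof. by case: triang => _ [_ []]. Qed.

Lemma tail_alpha_neq d : tail (alpha d) != tail d.
Proof. by case: triang => _ [_ [_ []]]. Qed.

Lemma tail2_inj d d' : tail d = tail d' -> tail (alpha d) = tail (alpha d') -> d = d'.
Proof. by case: triang => _ [_ [_ [_ [simple _]]]]; apply: simple. Qed.

Lemma adj_connect u v : connect G u v.
Proof. by case: triang => _ [_ [_ [_ [_ []]]]]. Qed.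

Lemma euler_formula : (#|V| + nfaces alpha sigma = nedges D + 2)%N.
Proof. by case: triang => _ [_ [_ [_ [_ [_ []]]]]]. Qed.

Lemma order_phi d : fingraph.order ph d = 3%N.
Proof. by case: triang => _ [_ [_ [_ [_ [_ [_ ->]]]]]]. Qed.

Lemma adj_irr : irreflexive G.
Proof.
move=> v; apply/existsP => -[d /andP[/eqP td /eqP tad]].
by move: (tail_alpha_neq d); rewrite td tad eqxx.
Qed.

Lemma phi_inj : injective ph.
Proof. by move=> x y; rewrite /phi => /perm_inj /perm_inj. Qed.

Lemma tail_sigma d : tail (sigma d) = tail d.
Proof. by apply/eqP; rewrite eq_sym eq_tail fconnect1. Qed.

Lemma tail_alpha_phi d : tail (alpha d) = tail (ph d).
Proof. by rewrite /phi tail_sigma. Qed.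

(* Since sigma = phi \o alpha and G is connected, phi and alpha act transitively on darts. *)
Lemma dart_invariant_const (T : eqType) (h : D -> T) :
  (forall d, h (ph d) = h d) -> (forall d, h (alpha d) = h d) -> forall d d', h d = h d'.
Proof.
move=> h_phi h_alpha.
have h_sigma d : h (sigma d) = h d by rewrite -{1}[d]alphaK h_phi h_alpha.
have h_tail d d' : tail d = tail d' -> h d = h d'.
  move/eqP; rewrite eq_tail => /connectP[p sp ->] {d'}.
  by elim: p d sp => //= y p IH d /andP[/eqP <- sp]; rewrite -IH // h_sigma.
move=> d d'; have /connectP[p Gp td'] := adj_connect (tail d) (tail d').
elim: p d Gp td' => [|y p IH] d /=; first by move=> _ /esym/h_tail.
case/andP=> /existsP[e /andP[/eqP te /eqP tae]] Gp td'.
by rewrite (h_tail d e) -?te // -h_alpha; apply: IH; rewrite ?tae.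
Qed.

Definition edge_reps : {set D} := [set d | (enum_rank d < enum_rank (alpha d))%N].

Lemma edge_reps_alpha d : (alpha d \in edge_reps) = (d \notin edge_reps).
Proof.
have : (enum_rank d : nat) != enum_rank (alpha d).
  by apply: contra_neq (alpha_neq d) => /val_inj /enum_rank_inj.
by rewrite !inE alphaK; case: ltngtP.
Qed.

Lemma sum_edge_reps (R : nmodType) (g : D -> R) :
  \sum_(d in edge_reps) (g d + g (alpha d)) = \sum_d g d.
Proof.
rewrite big_split /= [RHS](bigID (mem edge_reps)) /=; congr (_ + _).
rewrite (reindex_inj (@perm_inj _ alpha)) /=.
by apply: eq_big => [d|d _]; rewrite ?edge_reps_alpha ?alphaK.
Qed.

Lemma card_darts_edges : #|D| = (2 * #|edge_reps|)%N.
Proof.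
have := sum_edge_reps (fun=> 1%N); rewrite sum1_card => <-.
by rewrite (eq_bigr (fun=> 2%N)) // sum_nat_const mulnC.
Qed.

Lemma phi_connect_sym : connect_sym (frel ph).
Proof. exact: fconnect_sym phi_inj. Qed.

Definition face_reps : {set D} := [set d | froot ph d == d].
Local Notation nF := #|face_reps|.
Definition face (j : 'I_nF) : D := enum_val j.

Lemma froot_face j : froot ph (face j) = face j.
Proof. by have := enum_valP j; rewrite inE => /eqP. Qed.

Lemma fconnect_face j j' : fconnect ph (face j) (face j') = (j == j').
Proof.
apply/idP/eqP => [|->]; last exact: connect0.
by move/(fingraph.rootP phi_connect_sym); rewrite !froot_face => /enum_val_inj.
Qed.

Lemma sum_fconnect_face d : (\sum_j (fconnect ph (face j) d : nat))%N = 1%N.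
Proof.
have rd : froot ph d \in face_reps by rewrite inE (fingraph.root_root phi_connect_sym).
pose j0 := enum_rank_in rd (froot ph d).
have fj0 : face j0 = froot ph d by rewrite /face enum_rankK_in.
rewrite (bigD1 j0) //= fj0 phi_connect_sym connect_root big1 ?addn0 // => j jj0.
apply/eqP; rewrite eqb0; apply: contra jj0 => cj.
by rewrite -fconnect_face fj0 (connect_trans cj) // connect_root.
Qed.

Lemma card_darts_faces : #|D| = (3 * nF)%N.
Proof.
transitivity (\sum_(d : D) 1)%N; first by rewrite sum1_card.
rewrite (eq_bigr _ (fun d _ => esym (sum_fconnect_face d))) exchange_big /=.
transitivity (\sum_(j < nF) 3)%N; last by rewrite sum_nat_const card_ord mulnC.
apply: eq_bigr => j _.
rewrite -(order_phi (face j)) /fingraph.order -sum1_card [RHS]big_mkcond.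
by apply: eq_bigr => d _; rewrite -topredE /=; case: (fconnect ph (face j) d).
Qed.

Lemma euler_reps : (#|V| + nF = #|edge_reps| + 2)%N.
Proof.
have -> : nF = nfaces alpha sigma by apply: eq_card => x; rewrite !inE andbT.
by rewrite euler_formula /nedges card_darts_edges mulKn.
Qed.

Local Notation nE := #|edge_reps|.
Definition edge_dart (i : 'I_nE) : D := enum_val i.
Definition edge_src (i : 'I_nE) : 'I_#|V| := enum_rank (tail (edge_dart i)).
Definition edge_dst (i : 'I_nE) : 'I_#|V| := enum_rank (tail (alpha (edge_dart i))).

Lemma edge_src_dst_neq i : edge_src i != edge_dst i.
Proof. by apply: contra_neq (tail_alpha_neq (edge_dart i)) => /enum_rank_inj ->. Qed.

Lemma edge_dartP d : exists i, d = edge_dart i \/ alpha d = edge_dart i.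
Proof.
have [dE|] := boolP (d \in edge_reps).
  by exists (enum_rank_in dE d); left; rewrite /edge_dart enum_rankK_in.
rewrite -edge_reps_alpha => adE.
by exists (enum_rank_in adE (alpha d)); right; rewrite /edge_dart enum_rankK_in.
Qed.

Lemma alpha_invariant (T : eqType) (h : D -> T) :
  (forall i, h (alpha (edge_dart i)) = h (edge_dart i)) -> forall d, h (alpha d) = h d.
Proof.
move=> h_i d; have [i [->|ad]] := edge_dartP d; first exact: h_i.
by rewrite -{2}[d]alphaK ad h_i.
Qed.

Lemma sum_edge_dart (R : nmodType) (g : D -> R) :
  \sum_(i < nE) g (edge_dart i) = \sum_(d in edge_reps) g d.
Proof. by rewrite (big_enum_val g). Qed.

Local Notation incG := (incmx edge_src edge_dst).

Definition facemx : 'M[F2]_(nF, nE) :=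
  \matrix_(j, i) ((fconnect ph (face j) (edge_dart i))%:R
                  + (fconnect ph (face j) (alpha (edge_dart i)))%:R).

Definition face_val (x : 'rV[F2]_nF) d := \sum_j x 0 j * (fconnect ph (face j) d)%:R.

Lemma mul_facemx x i :
  (x *m facemx) 0 i = face_val x (edge_dart i) + face_val x (alpha (edge_dart i)).
Proof. by rewrite mxE -big_split /=; apply: eq_bigr => j _; rewrite mxE mulrDr. Qed.

Lemma face_val_phi x d : face_val x (ph d) = face_val x d.
Proof. by apply: eq_bigr => j _; rewrite -(same_fconnect1_r phi_inj). Qed.

Lemma face_val_face x j : face_val x (face j) = x 0 j.
Proof.
rewrite /face_val (bigD1 j) //= fconnect_face eqxx mulr1 big1 ?addr0 // => j' /negbTE jj.
by rewrite fconnect_face jj mulr0.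
Qed.

Lemma face_val_const1 d : face_val (const_mx 1) d = 1.
Proof.
by rewrite /face_val; under eq_bigr do rewrite mxE mul1r; rewrite -natr_sum sum_fconnect_face.
Qed.

Lemma const1_facemx : (const_mx 1 : 'rV[F2]_nF) *m facemx = 0.
Proof. by apply/rowP => i; rewrite mul_facemx !face_val_const1 F2_addrr mxE. Qed.

Lemma face_val_alpha x i :
  (x *m facemx) 0 i = 0 -> face_val x (alpha (edge_dart i)) = face_val x (edge_dart i).
Proof. by move=> x0; apply/eqP; rewrite -subr_eq0 F2_oppr addrC -mul_facemx x0. Qed.

Lemma face_val_alpha_ker x : x *m facemx = 0 -> forall d, face_val x (alpha d) = face_val x d.
Proof. by move=> x0; apply: alpha_invariant => i; rewrite face_val_alpha // x0 mxE. Qed.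

(* Each face boundary is a cycle: the darts of the face, shifted by phi, have the same tails. *)
Lemma facemx_incG : facemx *m incG = 0.
Proof.
apply/matrixP => j v; rewrite !mxE.
pose s d := ((enum_rank (tail d) == v)%:R + (enum_rank (tail (alpha d)) == v)%:R : F2).
pose g d := (fconnect ph (face j) d)%:R * s d.
transitivity (\sum_(i < nE) (g (edge_dart i) + g (alpha (edge_dart i)))).
  apply: eq_bigr => i _; rewrite /g /s !mxE incmxE alphaK /edge_src /edge_dst.
  by rewrite [X in _ = _ + _ * X]addrC -mulrDl.
rewrite (sum_edge_dart (fun d => g d + g (alpha d))) sum_edge_reps /g /s.
under eq_bigr do rewrite mulrDr.
rewrite big_split /=.
suff -> : \sum_d ((fconnect ph (face j) d)%:R * (enum_rank (tail (alpha d)) == v)%:R : F2) =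
          \sum_d ((fconnect ph (face j) d)%:R * (enum_rank (tail d) == v)%:R).
  exact: F2_addrr.
rewrite [RHS](reindex_inj phi_inj) /=; apply: eq_bigr => d _.
by rewrite -(same_fconnect1_r phi_inj) tail_alpha_phi.
Qed.

Lemma mxrank_facemx : (nF <= (\rank facemx).+1)%N.
Proof.
apply: mxrank_ker_le_const1; apply/row_subP => k.
have x0 : row k (kermx facemx) *m facemx = 0 by apply/sub_kermxP; exact: row_sub.
have x_const := dart_invariant_const (face_val_phi _) (face_val_alpha_ker x0).
by apply: row_sub_const1 => j j'; rewrite -!face_val_face.
Qed.

Lemma mxrank_incG : (#|V| <= (\rank incG).+1)%N.
Proof.
rewrite -mxrank_tr; apply: mxrank_ker_le_const1; apply/row_subP => k.
set c := row k (kermx incG^T).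
have c0 : c *m incG^T = 0 by apply/sub_kermxP; exact: row_sub.
pose h d := c 0 (enum_rank (tail d)).
have h_alpha : forall d, h (alpha d) = h d.
  apply: alpha_invariant => i; apply/eqP; rewrite -subr_eq0 F2_oppr addrC.
  by have := mul_tr_incmx edge_src edge_dst c i; rewrite c0 mxE => <-.
have h_phi d : h (ph d) = h d by rewrite /h -tail_alpha_phi -/(h _) h_alpha.
have h_const := dart_invariant_const h_phi h_alpha.
apply: row_sub_const1 => v v'.
have [d td] := tail_surj (enum_val v); have [d' td'] := tail_surj (enum_val v').
by rewrite -(enum_valK v) -(enum_valK v') -td -td' -/(h d) -/(h d') (h_const d d').
Qed.

(* Euler's formula makes the face boundaries span the whole cycle space. *)
Lemma ker_incG_sub_facemx : (kermx incG <= facemx)%MS.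
Proof.
have sub : (facemx <= kermx incG)%MS by apply/sub_kermxP; exact: facemx_incG.
have [le eq_ker] := mxrank_leqif_sup sub.
rewrite -eq_ker eqn_leq le /= mxrank_ker.
have := mxrank_incG; have := mxrank_facemx; have := euler_reps; have := rank_leq_col incG.
by move: (\rank incG) (\rank facemx); lia.
Qed.

(* A 1-selection deletes at most #|V| edges, fewer than the 3 #|V| - 6 of the triangulation. *)
Lemma edge_survives (f : {ffun V -> option V}) : (4 <= #|V|)%N -> exists u v, del_sel G f u v.
Proof.
move=> V4.
set B1 := [set d | f (tail d) == Some (tail (alpha d))].
set B2 := [set d | f (tail (alpha d)) == Some (tail d)].
have cB1 : (#|B1| <= #|V|)%N.
  apply: (@leq_card_in _ _ tail) => d d'; rewrite !inE => /eqP f1 /eqP f2 e.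
  by apply: tail2_inj => //; move: f1 f2; rewrite e => -> [].
have cB2 : (#|B2| <= #|V|)%N.
  apply: (@leq_card_in _ _ (tail \o alpha)) => d d'; rewrite !inE => /eqP f1 /eqP f2 /= e.
  by apply: tail2_inj => //; move: f1 f2; rewrite e => -> [].
have [d|all_sel] := pickP [predC B1 :|: B2]; last first.
  have : (#|D| <= #|B1 :|: B2|)%N.
    by apply/subset_leq_card/subsetP => d _; move/negbFE: (all_sel d).
  have [cU _] := leq_card_setU B1 B2.
  have := card_darts_edges; have := card_darts_faces; have := euler_reps.
  by move: cU cB1 cB2 V4; lia.
rewrite !inE negb_or => /andP[n1 n2].
exists (tail d), (tail (alpha d)); rewrite /del_sel n1 n2 !andbT.
by apply/existsP; exists d; rewrite !eqxx.
Qed.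

Definition selects (f : {ffun V -> option V}) d :=
  (f (tail d) == Some (tail (alpha d))) || (f (tail (alpha d)) == Some (tail d)).

Lemma selects_alpha f d : selects f (alpha d) = selects f d.
Proof. by rewrite /selects alphaK orbC. Qed.

Section OrientationSelection.
Variables (P : {set 'I_nE}) (g : 'I_nE -> 'I_#|V|).
Hypothesis g_or : injective_orientation edge_src edge_dst P g.

Definition other_end (i : 'I_nE) (v : 'I_#|V|) : V :=
  if edge_src i == v then tail (alpha (edge_dart i)) else tail (edge_dart i).

Definition orientation_selection : {ffun V -> option V} :=
  [ffun v => if [pick i in P | g i == enum_rank v] is Some i
             then Some (other_end i (enum_rank v)) else None].

Lemma one_selection_orientation : one_selection G orientation_selection.
Proof.
apply/forallP => v; rewrite ffunE; case: pickP => [i /andP[iP /eqP gi]|_] //=.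
apply/existsP; move: (g_or.1 i iP); rewrite /incident gi /other_end.
have [/enum_rank_inj <- _|_ /eqP/enum_rank_inj <-] := eqVneq (edge_src i) (enum_rank v).
  by exists (edge_dart i); rewrite !eqxx.
by exists (alpha (edge_dart i)); rewrite alphaK !eqxx.
Qed.

Lemma orientation_selection_selects i : i \in P -> selects orientation_selection (edge_dart i).
Proof.
move=> iP; have f_gi : orientation_selection (enum_val (g i)) = Some (other_end i (g i)).
  rewrite ffunE enum_valK; case: pickP => [j /andP[jP /eqP gj]|/(_ i)]; last by rewrite iP eqxx.
  by rewrite (g_or.2 _ _ jP iP gj).
rewrite /selects; move: (g_or.1 i iP); rewrite /incident.
have [src_g _|_ /eqP dst_g] := eqVneq (edge_src i) (g i).
  suff -> : orientation_selection (tail (edge_dart i)) = Some (tail (alpha (edge_dart i))).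
    by rewrite eqxx.
  by rewrite -[tail _]enum_rankK -/(edge_src i) src_g f_gi /other_end src_g eqxx.
suff -> : orientation_selection (tail (alpha (edge_dart i))) = Some (tail (edge_dart i)).
  by rewrite eqxx orbT.
rewrite -[tail _]enum_rankK -/(edge_dst i) dst_g f_gi /other_end -dst_g.
by rewrite (negbTE (edge_src_dst_neq i)).
Qed.

End OrientationSelection.

Section TwoFactor.
Variable S : {set D}.
Hypothesis S_2factor : dual_two_factor alpha sigma S.

Lemma S_alpha d : (alpha d \in S) = (d \in S).
Proof. by case: S_2factor. Qed.

Lemma sum_S_face_val x : \sum_d (d \in S)%:R * face_val x d = 0.
Proof.
rewrite /face_val; under eq_bigr do rewrite big_distrr /=.
rewrite exchange_big /= big1 // => j _.
set Sj := [set d' in S | fconnect ph (face j) d'].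
transitivity (x 0 j * #|Sj|%:R); last by have [_ ->] := S_2factor; rewrite F2_natr_even ?mulr0.
rewrite -[#|Sj|]sum1_card natr_sum big_distrr /= [RHS]big_mkcond /=; apply: eq_bigr => d _.
rewrite inE; case: (d \in S); case: (fconnect ph (face j) d);
  by rewrite /= ?mulr0 ?mulr1 ?mul0r ?mul1r.
Qed.

Lemma S_orthogonal_cycles (y : 'rV[F2]_nE) : (y <= kermx incG)%MS ->
  \sum_i (edge_dart i \in S)%:R * y 0 i = 0.
Proof.
move/submx_trans/(_ ker_incG_sub_facemx)/submxP => [x ->].
under eq_bigr do rewrite mul_facemx mulrDr.
pose g d := (d \in S)%:R * face_val x d + (d \in S)%:R * face_val x (alpha d).
rewrite (sum_edge_dart g).
by rewrite -[RHS](sum_S_face_val x) -sum_edge_reps; apply: eq_bigr => d _; rewrite S_alpha.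
Qed.

Definition S_edges : {set 'I_nE} := [set i | edge_dart i \in S].
Local Notation incS := (incmx_on edge_src edge_dst S_edges).

Definition S_indicator : 'rV[F2]_nE := \row_i (i \in S_edges)%:R.

(* The indicator of S is orthogonal to the cycle space, hence lies in the cut space. *)
Lemma S_indicator_sub : (S_indicator <= incS^T)%MS.
Proof.
rewrite submxE; apply/eqP/rowP => k; rewrite !mxE.
have K0 : incS^T *m cokermx incS^T = 0 := mulmx_coker _.
set K := cokermx incS^T in K0 *.
pose y : 'rV[F2]_nE := \row_i ((i \in S_edges)%:R * K i k).
have y_cycle : (y <= kermx incG)%MS.
  apply/sub_kermxP/rowP => v; transitivity ((incS^T *m K) v k); last by rewrite K0 !mxE.
  rewrite !mxE; apply: eq_bigr => i _; rewrite !mxE.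
  by case: (i \in S_edges); rewrite ?mul1r ?mul0r // mulrC.
rewrite -[RHS](S_orthogonal_cycles y_cycle); apply: eq_bigr => i _; rewrite !mxE inE.
by case: (edge_dart i \in S); rewrite ?mul0r ?mul1r.
Qed.

Lemma S_cut : exists c : V -> F2, forall d, d \in S -> c (tail d) != c (tail (alpha d)).
Proof.
have /submxP[c Sc] := S_indicator_sub.
have cut i : i \in S_edges -> c 0 (edge_src i) != c 0 (edge_dst i).
  move=> iS; have := congr1 (fun M : 'rV_nE => M 0 i) Sc; rewrite mul_tr_incmx_on // mxE iS.
  by apply: contra_eq_neq => ->; rewrite F2_addrr; exact: oner_neq0.
exists (fun v => c 0 (enum_rank v)) => d dS.
have [i [di|ad]] := edge_dartP d.
  by rewrite di in dS *; apply: cut; rewrite inE.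
by rewrite eq_sym -{2}[d]alphaK ad; apply: cut; rewrite inE -ad S_alpha.
Qed.

Local Notation Srel := (dual_sub_rel alpha sigma S).
Hypothesis S_ncomp : (dual_ncomp alpha sigma S <= 2)%N.

Lemma dual_sub_rel_sym : connect_sym Srel.
Proof.
apply: sym_connect_sym => d d'; rewrite /dual_sub_rel (fconnect_sym phi_inj).
by congr (_ || _); apply/andP/andP => -[dS /eqP ->]; rewrite ?S_alpha ?alphaK.
Qed.

Lemma face_val_connect x : (forall i, i \in S_edges -> (x *m facemx) 0 i = 0) ->
  forall d d', connect Srel d d' -> face_val x d = face_val x d'.
Proof.
move=> x0; apply: connect_invariant => d d' /orP[|/andP[dS /eqP ->]].
  by apply: fconnect_invariant => e; rewrite /= face_val_phi eqxx.
have [i [di|ad]] := edge_dartP d.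
  by rewrite di face_val_alpha // x0 // inE -di.
by rewrite -{1}[d]alphaK ad face_val_alpha // x0 // inE -ad S_alpha.
Qed.

Local Notation incX := (incmx_on edge_src edge_dst (~: S_edges)).

Section Components.
Variable d0 : D.
Local Notation r0 := (fingraph.root Srel d0).

Lemma roots_ne_r0 r r' : fingraph.root Srel r = r -> fingraph.root Srel r' = r' ->
  r != r0 -> r' != r0 -> r = r'.
Proof.
move=> rr rr' n0 n0'; apply/eqP/negPn/negP => nr.
suff : (3 <= dual_ncomp alpha sigma S)%N by move: S_ncomp; lia.
have <- : #|r0 |: [set r; r']| = 3%N by rewrite cardsU1 cards2 nr !inE negb_or !(eq_sym r0) n0 n0'.
apply/subset_leq_card/subsetP => z; rewrite !inE andbT => /or3P[] /eqP ->.
all: by rewrite /roots ?rr ?rr' ?(fingraph.root_root dual_sub_rel_sym).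
Qed.

Definition comp_indicator : 'rV[F2]_nF := \row_j (fingraph.root Srel (face j) == r0)%:R.

(* A combination of faces whose boundary avoids S is constant on the at most two components of S. *)
Lemma facemx_avoiding_S (x : 'rV[F2]_nF) : (forall i, i \in S_edges -> (x *m facemx) 0 i = 0) ->
  (x *m facemx <= comp_indicator *m facemx)%MS.
Proof.
move=> x0; have x_root j : x 0 j = face_val x (fingraph.root Srel (face j)).
  by rewrite -face_val_face; apply: face_val_connect => //; exact: connect_root.
pose s := if [pick j | fingraph.root Srel (face j) != r0] is Some j1 then x 0 j1 else face_val x r0.
have -> : x = s *: const_mx 1 + (face_val x r0 - s) *: comp_indicator.
  apply/rowP => j; rewrite !mxE mulr1; case: eqP => [e|/eqP ne].
    by rewrite mulr1 addrC subrK x_root e.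
  rewrite mulr0 addr0 /s; case: pickP => [j1 /= n1|/(_ j)]; last by rewrite ne.
  rewrite !x_root; congr (face_val x _).
  by apply: roots_ne_r0 => //; exact: (fingraph.root_root dual_sub_rel_sym).
by rewrite mulmxDl -!scalemxAl const1_facemx scaler0 add0r scalemx_sub.
Qed.

Definition S_basis : 'M[F2]_(#|S_edges|, nE) := \matrix_k 'e_(enum_val k).

Lemma sub_S_basis (y : 'rV[F2]_nE) : (forall i, i \notin S_edges -> y 0 i = 0) ->
  (y <= S_basis)%MS.
Proof.
move=> y0; rewrite (@row_sum_delta F2 _ y) (bigID (mem S_edges)) /=.
rewrite [X in _ + X]big1 ?addr0 => [|i iS]; last by rewrite y0 // scale0r.
apply: summx_sub => i iS; apply: scalemx_sub.
by apply: (eq_row_sub (enum_rank_in iS i)); rewrite rowK enum_rankK_in.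
Qed.

Lemma ker_incmx_on_nonS : (kermx incX <= S_basis + comp_indicator *m facemx)%MS.
Proof.
apply/row_subP => k; set y := row k (kermx incX).
have y0 : y *m incX = 0 by apply/sub_kermxP; exact: row_sub.
clearbody y; pose yX : 'rV[F2]_nE := \row_i ((i \notin S_edges)%:R * y 0 i).
have -> : y = (y - yX) + yX by rewrite subrK.
apply: addmx_sub_adds.
  apply: sub_S_basis => i iS; rewrite !mxE iS mul1r.
  by apply/eqP; rewrite subr_eq0.
have yX_cycle : (yX <= kermx incG)%MS.
  apply/sub_kermxP/rowP => v; transitivity ((y *m incX) 0 v); last by rewrite y0 mxE.
  rewrite !mxE; apply: eq_bigr => i _; rewrite !mxE in_setC.
  by case: (i \in S_edges); rewrite /= ?mul0r ?mulr0 ?mul1r.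
have /submxP[x yXx] := submx_trans yX_cycle ker_incG_sub_facemx.
by rewrite yXx; apply: facemx_avoiding_S => i iS; rewrite -yXx mxE iS mul0r.
Qed.
End Components.

Lemma mxrank_incmx_on_nonS : (#|~: S_edges| <= (\rank incX).+1)%N.
Proof.
have [d0 _|D0] := pickP (@predT D); last first.
  have := card_darts_edges; rewrite (eq_card0 D0) => E0.
  by have := max_card (~: S_edges); rewrite card_ord; lia.
have := mxrankS (ker_incmx_on_nonS d0); rewrite mxrank_ker.
have [rU _] := mxrank_adds_leqif S_basis (comp_indicator d0 *m facemx).
have := rank_leq_row S_basis; have := rank_leq_row (comp_indicator d0 *m facemx).
have := cardsC S_edges; rewrite card_ord; move: rU.
move: (\rank incX) (\rank (S_basis + _)%MS) (\rank S_basis) (\rank (_ *m facemx)).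
lia.
Qed.

Lemma S_selection : exists2 f, one_selection G f & forall d, d \notin S -> selects f d.
Proof.
have [g g_or] := pseudoforest_orientation edge_src_dst_neq mxrank_incmx_on_nonS.
exists (orientation_selection (~: S_edges) g); first exact: one_selection_orientation.
move=> d dS; have [i [di|ad]] := edge_dartP d.
  by rewrite di orientation_selection_selects // !inE -di.
by rewrite -selects_alpha ad orientation_selection_selects // !inE -ad S_alpha.
Qed.

End TwoFactor.
End RotationSystem.

Local Close Scope ring_scope.
Unset Implicit Arguments.

Theorem proposition3p5 (V D : finType) (tail : D -> V) (alpha sigma : {perm D}) :
  plane_triangulation tail alpha sigma ->
  4 <= #|V| ->
  (exists S : {set D}, dual_two_factor alpha sigma S /\ dual_ncomp alpha sigma S <= 2) ->
  chi1 (adj tail alpha) = 2.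
Proof.
move=> triang V4 [S [S2 ncS]].
have [c c_cut] := S_cut triang S2.
have [f f_sel f_S] := S_selection triang S2 ncS.
apply: (chi1_eq2 (adj_irr triang) f_sel); last by move=> g; exact: edge_survives triang g V4.
apply: (@colorable2_bool _ _ (fun v => c v == 0%R)) => u v.
case/andP=> _ /and3P[/existsP[d /andP[/eqP <- /eqP <-]] fu fv].
apply/F2_eq0_neq/c_cut; apply: contraT => /f_S.
by rewrite /selects (negbTE fu) (negbTE fv).
Qed.
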